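(* Let $\Phi=(V,C)$ be a CNF formula in which every clause contains at least $k_1$ and at most $k_2$ variables, and every variable belongs to at most $d$ clauses. Let $s\ge k_2$. If $2^{k_1}\ge 2\mathrm{e}ds$, then $\Phi$ has a satisfying assignment, and for every $v\in V$, $$\max\left\{\Pr_{X\sim\mu}[X(v)=0],\ \Pr_{X\sim\mu}[X(v)=1]\right\}\le \frac12\exp\left(\frac1s\right),$$ where $\mu$ is the uniform distribution over all satisfying assignments of $\Phi$.
   Context: A CNF formula $\Phi=(V,C)$ has a set $V$ of Boolean variables and a set $C$ of clauses; each clause is a disjunction of literals on distinct variables (no clause contains both $x$ and $\neg x$). The number of variables of a clause $c$ is $|\mathsf{vbl}(c)|$, where $\mathsf{vbl}(c)$ is the set of variables appearing in $c$. *)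

From HB Require Import structures.
From mathcomp Require Import all_boot all_order all_algebra.
From mathcomp Require Import all_classical all_reals all_analysis.
Set Implicit Arguments. Unset Strict Implicit. Unset Printing Implicit Defensive.
Import Order.TTheory GRing.Theory Num.Theory.
Local Open Scope ring_scope.

(* A clause over the variable set V: for each variable, either it does not
   occur (None) or it occurs as a literal with polarity b (Some b), the literal
   being satisfied by an assignment x iff x v = b.  This encodes "literals on
   distinct variables, never both x and ~x". *)
Definition clause (V : finType) := {ffun V -> option bool}.

Definition vbl (V : finType) (c : clause V) : {set V} := [set v | c v != None].

Definition assignment (V : finType) := {ffun V -> bool}.

Definition sat_clause (V : finType) (c : clause V) (x : assignment V) : bool :=
  [exists v, c v == Some (x v)].

Definition satisfies (V : finType) (C : {set clause V}) (x : assignment V) : bool :=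
  [forall c in C, sat_clause c x].

Definition sat_assignments (V : finType) (C : {set clause V}) : {set assignment V} :=
  [set x | satisfies C x].

Definition var_degree (V : finType) (C : {set clause V}) (v : V) : nat :=
  #|[set c in C | v \in vbl c]|.

Definition mu_prob (R : realType) (V : finType) (C : {set clause V}) (v : V) (b : bool) : R :=
  (#|[set x in sat_assignments C | x v == b]|%:R / #|sat_assignments C|%:R)%R.

From HB Require Import structures.
From mathcomp Require Import all_boot all_order all_algebra.
From mathcomp Require Import all_classical all_reals all_analysis.
(* Re-imported so that finset's lemmas (subsetP, setU0, ...) are not shadowed
   by their classical_sets namesakes. *)
From mathcomp Require Import fintype finset.
From mathcomp Require Import ring lra.
Import Order.TTheory GRing.Theory Num.Theory.
Local Open Scope ring_scope.

Set Implicit Arguments.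
Unset Strict Implicit.
Unset Printing Implicit Defensive.

(* A counting form of the symmetric local lemma.  Write N(S) for the number of
   assignments satisfying the clauses of S and let y = exp(-1/(ds)).  By strong
   induction on S included in C, every clause c of C is violated by at most a
   (1 - y)-fraction of these N(S) assignments: if S' is S minus the clauses that
   share a variable with c, the literals of c are independent of S', so at most
   N(S')/2^|c| assignments satisfy S and violate c; adding back the at most |c|d
   removed clauses one at a time keeps a y-fraction each time, so
   N(S) >= y^(|c|d) N(S').  The hypothesis 2^k1 >= 2eds makes
   2^|c| (1 - y) y^(|c|d) >= 1.  Hence N(C) >= y^|C| 2^|V| > 0, and the same two
   estimates for the unit clause excluding X(v) = b, which has at most d
   neighbours, give Pr[X(v) = b] <= y^(-d)/2 <= exp(1/s)/2. *)

Lemma card_bigcup_le (T I : finType) (P : pred I) (F : I -> {set T}) :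
  (#|\bigcup_(i | P i) F i| <= \sum_(i | P i) #|F i|)%N.
Proof.
apply: (big_ind2 (fun (A : {set T}) n => #|A| <= n)%N) => [|A m B n leA leB|//].
  by rewrite cards0.
by apply: leq_trans (leq_add leA leB); exact: (leq_card_setU A B).1.
Qed.

Section Counting.
Variable V : finType.
Implicit Types (S T : {set clause V}) (a c : clause V) (x : assignment V).

Definition nsat S := #|sat_assignments S|.
Definition nviol S a := #|[set x in sat_assignments S | ~~ sat_clause a x]|.
Definition neighbours S a := [set c in S | ~~ [disjoint vbl c & vbl a]].

Lemma satisfiesU1 c S x : satisfies (c |: S) x = sat_clause c x && satisfies S x.
Proof.
apply/forall_inP/andP => [sat_cS | [sat_c /forall_inP sat_S] c'].
  split; first by apply: sat_cS; rewrite setU11.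
  by apply/forall_inP => c' c'S; apply: sat_cS; rewrite setU1r.
by case/setU1P => [->|/sat_S].
Qed.

Lemma satisfies_subset S T x : T \subset S -> satisfies S x -> satisfies T x.
Proof. by move=> /subsetP sTS /forall_inP sat_S; apply/forall_inP => c /sTS /sat_S. Qed.

Lemma nsat_setU1 S c : nsat S = (nsat (c |: S) + nviol S c)%N.
Proof.
rewrite /nsat /nviol -(cardsID [set x | sat_clause c x] (sat_assignments S)).
by congr (_ + _)%N; apply: eq_card => x; rewrite !inE ?satisfiesU1 andbC.
Qed.

Lemma nviol_subset S T c : T \subset S -> (nviol S c <= nviol T c)%N.
Proof.
move=> sTS; apply/subset_leq_card/subsetP => x.
by rewrite !inE => /andP[/(satisfies_subset sTS) -> ->].
Qed.

Definition flip w x : assignment V := [ffun u => if u == w then ~~ x u else x u].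

Lemma flipK w : involutive (flip w).
Proof. by move=> x; apply/ffunP => u; rewrite !ffunE; case: eqP; rewrite ?negbK. Qed.

Lemma sat_clause_flip w c x : w \notin vbl c -> sat_clause c (flip w x) = sat_clause c x.
Proof.
rewrite inE negbK => /eqP cw; apply: eq_existsb => u; rewrite ffunE.
by case: (u =P w) => [->|]; rewrite ?cw.
Qed.

Lemma satisfies_flip S w x : {in S, forall c, w \notin vbl c} ->
  satisfies S (flip w x) = satisfies S x.
Proof.
move=> wS; apply: eq_forallb => c.
by case cS: (c \in S); rewrite //= sat_clause_flip ?wS.
Qed.

Lemma card_flip_invariant (P : pred (assignment V)) w b :
  (forall x, P (flip w x) = P x) ->
  (#|[set x | P x && (x w == b)]| * 2 = #|[set x | P x]|)%N.
Proof.
move=> Pflip; rewrite muln2 -addnn.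
rewrite -(cardsID [set x : assignment V | x w == b] [set x | P x]).
congr (_ + _)%N; first by apply: eq_card => x; rewrite !inE.
rewrite -(card_preimset _ (inv_inj (flipK w))); apply: eq_card => x.
by rewrite !inE Pflip /flip ffunE eqxx andbC; case: (x w) b => -[].
Qed.

Definition drop_lit a w : clause V := [ffun u => if u == w then None else a u].

Lemma vbl_drop_lit a w : vbl (drop_lit a w) = vbl a :\ w.
Proof. by apply/setP => u; rewrite !inE ffunE; case: (u =P w). Qed.

Lemma sat_clause_drop_lit a w b x : a w = Some b ->
  sat_clause a x = sat_clause (drop_lit a w) x || (x w == b).
Proof.
move=> awb; apply/existsP/orP => [[u]|[/existsP[u]|/eqP xw]].
- case: (u =P w) => [->|uw au]; first by rewrite awb => /eqP[->]; right.
  by left; apply/existsP; exists u; rewrite ffunE (introF eqP uw).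
- by rewrite ffunE; case: (u =P w) => // _ au; exists u.
- by exists w; rewrite awb xw.
Qed.

Lemma nviol_indep S a : {in S, forall c, [disjoint vbl c & vbl a]} ->
  (nviol S a * 2 ^ #|vbl a| = nsat S)%N.
Proof.
move card_a: #|vbl a| => n; elim: n a card_a => [|n IH] a card_a disj.
  have a0 u : a u = None.
    have: u \notin vbl a by rewrite (cards0_eq card_a) inE.
    by rewrite inE negbK => /eqP.
  have unsat x : sat_clause a x = false by apply/existsP => -[u]; rewrite a0.
  by rewrite muln1; apply: eq_card => x; rewrite !inE unsat andbT.
have [w wa] : exists w, w \in vbl a by apply/set0Pn; rewrite -cards_eq0 card_a.
have [b awb] : exists b, a w = Some b.
  by move: wa; rewrite inE; case: (a w) => // b; exists b.
have card_dropped : #|vbl (drop_lit a w)| = n.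
  by move: card_a; rewrite vbl_drop_lit (cardsD1 w) wa => -[].
have disj' : {in S, forall c, [disjoint vbl c & vbl (drop_lit a w)]}.
  by move=> c /disj; apply: disjointWr; rewrite vbl_drop_lit subD1set.
pose P x := satisfies S x && ~~ sat_clause (drop_lit a w) x.
have Pflip x : P (flip w x) = P x.
  rewrite /P sat_clause_flip ?vbl_drop_lit ?setD11 // satisfies_flip //.
  by move=> c /disj/disjointFl/(_ wa) ->.
rewrite expnS mulnA -(IH _ card_dropped disj'); congr (_ * _)%N.
have -> : nviol S (drop_lit a w) = #|[set x | P x]| by apply: eq_card => x; rewrite !inE.
rewrite -(card_flip_invariant (~~ b) Pflip); congr (_ * _)%N; apply: eq_card => x.
by rewrite !inE (sat_clause_drop_lit _ awb) negb_or andbA; clear awb; case: (x w); case: b.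
Qed.

Lemma nviol_le_nsat_far S a :
  (nviol S a * 2 ^ #|vbl a| <= nsat (S :\: neighbours S a))%N.
Proof.
rewrite -(@nviol_indep _ a); first by rewrite leq_mul2r nviol_subset ?subsetDl ?orbT.
by move=> c; rewrite !inE negb_and negbK => /andP[/orP[/negbTE->|]].
Qed.

Lemma card_neighbours (C : {set clause V}) S a d : S \subset C ->
  (forall v, (var_degree C v <= d)%N) -> (#|neighbours S a| <= #|vbl a| * d)%N.
Proof.
move=> /subsetP sSC deg_le.
have sub : neighbours S a \subset \bigcup_(v in vbl a) [set c in C | v \in vbl c].
  apply/subsetP => c; rewrite inE => /andP[cS].
  rewrite -setI_eq0 => /set0Pn[v]; rewrite inE => /andP[vc va].
  by apply/bigcupP; exists v; rewrite // inE vc sSC.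
rewrite -sum_nat_const; apply: leq_trans (subset_leq_card sub) _.
by apply: leq_trans (card_bigcup_le _ _) _; apply: leq_sum => v _; apply: deg_le.
Qed.

Definition unit_clause v b : clause V := [ffun u => if u == v then Some b else None].

Lemma vbl_unit_clause v b : vbl (unit_clause v b) = [set v].
Proof. by apply/setP => u; rewrite !inE ffunE; case: (u =P v). Qed.

Lemma sat_unit_clause v b x : sat_clause (unit_clause v b) x = (x v == b).
Proof.
apply/existsP/eqP => [[u]|<-]; last by exists v; rewrite ffunE eqxx.
by rewrite ffunE; case: (u =P v) => // -> /eqP[].
Qed.

Lemma mu_probE (R : realType) C v b :
  mu_prob R C v b = (nviol C (unit_clause v (~~ b)))%:R / (nsat C)%:R.
Proof.
congr (_%:R / _); apply: eq_card => x.
by rewrite !inE sat_unit_clause; case: (x v) b => -[].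
Qed.

End Counting.

Section LocalLemma.
Variables (R : realType) (V : finType) (C : {set clause V}) (y : R).
Hypotheses (y_ge0 : 0 <= y) (y_le1 : y <= 1).
Implicit Types (S T U : {set clause V}) (a c : clause V).

Definition viol_bounded S :=
  forall c, c \in C -> (nviol S c)%:R <= (1 - y) * (nsat S)%:R.

Lemma nsat_setU1_ge S c : c \in C -> viol_bounded S ->
  y * (nsat S)%:R <= (nsat (c |: S))%:R.
Proof. by move=> cC /(_ c cC); rewrite (nsat_setU1 S c) natrD; nra. Qed.

Lemma nsat_setU_ge T U : U \subset C ->
  (forall U', U' \proper U -> viol_bounded (T :|: U')) ->
  y ^+ #|U| * (nsat T)%:R <= (nsat (T :|: U))%:R.
Proof.
move card_U: #|U| => n; elim: n U card_U => [|n IH] U card_U sUC bounded.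
  by rewrite (cards0_eq card_U) setU0 mul1r.
have [w wU] : exists w, w \in U by apply/set0Pn; rewrite -cards_eq0 card_U.
have ltUw : U :\ w \proper U by rewrite properD1.
rewrite -(setD1K wU) setUCA exprS -mulrA.
apply: le_trans (nsat_setU1_ge (subsetP sUC w wU) (bounded _ ltUw)).
apply: (ler_wpM2l y_ge0); apply: IH.
- by move: card_U; rewrite (cardsD1 w) wU => -[].
- exact: subset_trans (subD1set U w) sUC.
- by move=> U' /proper_sub_trans/(_ (subD1set U w)); apply: bounded.
Qed.

Lemma nsat_far_ge T a : T \subset C ->
  (forall T', T' \proper T -> viol_bounded T') ->
  y ^+ #|neighbours T a| * (nsat (T :\: neighbours T a))%:R <= (nsat T)%:R.
Proof.
move=> sTC bounded; set N := neighbours T a.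
have sNT : N \subset T by apply/subsetP => c; rewrite inE => /andP[].
have TE : (T :\: N) :|: N = T by rewrite setUC -{2}(setID T N) (setIidPr sNT).
rewrite -{2}TE; apply: nsat_setU_ge; first exact: subset_trans sNT sTC.
move=> U' /properP[sU'N [c cN cU']]; apply: bounded; apply/properP; split.
  by rewrite subUset subsetDl (subset_trans sU'N sNT).
by exists c; [exact: (subsetP sNT) | rewrite in_setU in_setD cN cU'].
Qed.

Lemma nviol_bound T a : T \subset C ->
  (forall T', T' \proper T -> viol_bounded T') ->
  (nviol T a)%:R * 2 ^+ #|vbl a| * y ^+ #|neighbours T a| <= (nsat T)%:R.
Proof.
move=> sTC bounded; apply: le_trans (nsat_far_ge a sTC bounded).
by rewrite mulrC ler_wpM2l ?exprn_ge0 // -natrX -natrM ler_nat nviol_le_nsat_far.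
Qed.

Variable d : nat.
Hypothesis deg_le : forall v, (var_degree C v <= d)%N.
Hypothesis weight : forall c n, c \in C -> (n <= #|vbl c| * d)%N ->
  1 <= 2 ^+ #|vbl c| * (1 - y) * y ^+ n.

Lemma viol_bounded_step T : T \subset C ->
  (forall T', T' \proper T -> viol_bounded T') -> viol_bounded T.
Proof.
move=> sTC bounded c cC.
have := nviol_bound c sTC bounded; have := weight cC (card_neighbours c sTC deg_le).
have := ler0n R (nviol T c); have : 0 <= 1 - y by rewrite subr_ge0.
nra.
Qed.

Lemma viol_bounded_sub T : T \subset C -> viol_bounded T.
Proof.
have [n] := ubnP #|T|; elim: n T => // n IH T; rewrite ltnS => leTn sTC.
apply: viol_bounded_step => // T' ltT'T; apply: IH.
  exact: leq_trans (proper_card ltT'T) leTn.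
exact: subset_trans (proper_sub ltT'T) sTC.
Qed.

Lemma nsat_gt0 : 0 < y -> (0 < nsat C)%N.
Proof.
move=> y_gt0; rewrite -(ltr0n R).
have bounded U' : U' \proper C -> viol_bounded (set0 :|: U').
  by rewrite set0U => /proper_sub/viol_bounded_sub.
have := nsat_setU_ge (subxx C) bounded.
rewrite set0U; apply: lt_le_trans; rewrite mulr_gt0 ?exprn_gt0 // ltr0n.
by apply/card_gt0P; exists [ffun=> true]; rewrite inE; apply/forall_inP => c; rewrite inE.
Qed.

Lemma mu_prob_bound v b : 0 < y -> 2 * y ^+ d * mu_prob R C v b <= 1.
Proof.
move=> y_gt0; rewrite mu_probE; set a := unit_clause v (~~ b).
have nsat_pos : 0 < (nsat C)%:R :> R by rewrite ltr0n nsat_gt0.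
have := @nviol_bound C a (subxx C) (fun T' ltT' => viol_bounded_sub (proper_sub ltT')).
have := card_neighbours a (subxx C) deg_le.
rewrite vbl_unit_clause cards1 expr1 mul1n => /(ler_wiXn2l y_ge0 y_le1) le_pow.
rewrite mulrA ler_pdivrMr // mul1r; apply: le_trans.
by rewrite mulrC mulrA ler_wpM2l ?mulr_ge0 ?ler0n.
Qed.

End LocalLemma.

Lemma expRNinv_mulD1_le (R : realType) (u : R) : 0 < u -> expR (- u^-1) * (u + 1) <= u.
Proof.
move=> u_gt0.
have -> : expR (- u^-1) * (u + 1) = u * (expR (- u^-1) * (1 + u^-1)).
  by field; rewrite gt_eqF.
apply: ler_piMr (ltW u_gt0) _.
by rewrite expRN mulrC ler_pdivrMr ?expR_gt0 // mul1r expR_ge1Dx.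
Qed.

Lemma weight_ge1 (R : realType) (u : R) (K n : nat) :
  1 <= u -> n%:R <= u -> 2 * expR 1 * u <= 2 ^+ K ->
  1 <= 2 ^+ K * (1 - expR (- u^-1)) * expR (- u^-1) ^+ n.
Proof.
move=> u_ge1 n_le_u K_ge; have u_gt0 : 0 < u by apply: lt_le_trans u_ge1.
set y := expR (- u^-1).
have y_pow : expR (-1) <= y ^+ n.
  by rewrite -expRM_natl ler_expR mulrN lerN2 ler_pdivrMr // mul1r.
have q_ge0 : 0 <= 1 - y by rewrite subr_ge0 expR_le1 oppr_le0 invr_ge0 ltW.
have uq_ge1 : 1 <= 2 * u * (1 - y).
  have : 0 <= (u - 1) * (1 - y) by rewrite mulr_ge0 // subr_ge0.
  have := expRNinv_mulD1_le u_gt0; rewrite -/y; nra.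
have eY_ge1 : 1 <= expR 1 * y ^+ n.
  by rewrite -[X in X <= _](expRxMexpNx_1 (1 : R)) ler_wpM2l ?expR_ge0.
apply: le_trans (_ : 2 * expR 1 * u * (1 - y) * y ^+ n <= _).
  have -> : 2 * expR 1 * u * (1 - y) * y ^+ n = 2 * u * (1 - y) * (expR 1 * y ^+ n) by ring.
  exact: mulr_ege1.
have := ler_wpM2r (mulr_ge0 q_ge0 (exprn_ge0 n (expR_ge0 (- u^-1)))) K_ge.
by rewrite !mulrA.
Qed.

Lemma weight_of_degree (R : realType) (k1 k k2 d n : nat) (s : R) :
  (0 < k1 <= k)%N -> (k <= k2)%N -> (0 < d)%N -> k2%:R <= s ->
  2 * expR 1 * d%:R * s <= 2 ^+ k1 -> (n <= k * d)%N ->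
  1 <= 2 ^+ k * (1 - expR (- (d%:R * s)^-1)) * expR (- (d%:R * s)^-1) ^+ n.
Proof.
move=> /andP[k1_gt0 k1_le] k_le d_gt0 k2_le lll n_le.
have s_ge1 : 1 <= s.
  by apply: le_trans k2_le; rewrite ler1n (leq_trans k1_gt0 (leq_trans k1_le k_le)).
apply: weight_ge1.
- by rewrite mulr_ege1 ?ler1n.
- apply: le_trans (_ : (k2 * d)%:R <= _).
    by rewrite ler_nat (leq_trans n_le) // leq_mul2r k_le orbT.
  by rewrite natrM mulrC ler_wpM2l ?ler0n.
- by rewrite mulrA; apply: le_trans lll _; apply: ler_weXn2l; rewrite ?ler1n.
Qed.

Theorem corollary2p2 (R : realType) (V : finType) (C : {set clause V})
    (k1 k2 d : nat) (s : R)
    (hk1 : (0 < k1)%N)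
    (hsize : forall c, c \in C -> (k1 <= #|vbl c| <= k2)%N)
    (hdeg : forall v : V, (var_degree C v <= d)%N)
    (hs : (k2%:R : R) <= s)
    (hlll : 2 * expR 1 * d%:R * s <= 2 ^+ k1) :
  (exists x : assignment V, satisfies C x) /\
  (forall v : V,
     Num.max (mu_prob R C v false) (mu_prob R C v true)
       <= 2^-1 * expR (s^-1)).
Proof.
have s_ge0 : 0 <= s := le_trans (ler0n _ _) hs.
set y := expR (- (d%:R * s)^-1).
have y_gt0 : 0 < y := expR_gt0 _.
have y_ge0 := ltW y_gt0.
have y_le1 : y <= 1 by rewrite expR_le1 oppr_le0 invr_ge0 mulr_ge0.
have weight c n : c \in C -> (n <= #|vbl c| * d)%N ->
    1 <= 2 ^+ #|vbl c| * (1 - y) * y ^+ n.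
  move=> cC n_le; have /andP[k1_le k2_ge] := hsize c cC.
  have [v vc] : exists v, v \in vbl c by apply/set0Pn; rewrite -card_gt0 (leq_trans hk1).
  apply: (weight_of_degree _ k2_ge _ hs hlll n_le); first by rewrite hk1.
  by apply: leq_trans (hdeg v); apply/card_gt0P; exists c; rewrite inE cC vc.
split.
  have /card_gt0P[x] := nsat_gt0 y_ge0 y_le1 hdeg weight y_gt0.
  by rewrite inE; exists x.
have y_pow : expR (- s^-1) <= y ^+ d.
  rewrite -expRM_natl ler_expR mulrN lerN2.
  have [->|d_neq0] := eqVneq d 0%N; first by rewrite mul0r invr_ge0.
  by rewrite invfM mulrA mulfV ?mul1r ?pnatr_eq0.
have mu_le v b : mu_prob R C v b <= 2^-1 * expR s^-1.
  have mu_ge0 : 0 <= mu_prob R C v b by rewrite divr_ge0 ?ler0n.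
  have : 0 <= mu_prob R C v b * (y ^+ d - expR (- s^-1)) by rewrite mulr_ge0 // subr_ge0.
  have := mu_prob_bound y_ge0 y_le1 hdeg weight v b y_gt0.
  have := expRxMexpNx_1 s^-1; have := expR_gt0 s^-1.
  nra.
by move=> v; rewrite ge_max !mu_le.
Qed.
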